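(* (Soundness) For every $\varphi\in\mathcal{L}_{AIL}$, if $\vdash\varphi$ in the system $\mathbf{AIL}$, then $\varphi$ is valid, i.e. $M,w\vDash_{AIL}\varphi$ for every epistemic model with awareness $M$ and every world $w$ of $M$.
   Context: Let $\mathcal{P}$ be a countable set of atoms and $\mathcal{G}$ a finite set of agents. An epistemic model with awareness is $M=\langle W,\{\sim_i,\mathscr{A}_i\}_{i\in\mathcal{G}},V\rangle$: $W\neq\emptyset$, $\sim_i$ an equivalence relation on $W$, $\mathscr{A}_i:W\to 2^{\mathcal{P}}$ with $\mathscr{A}_i(w)=\mathscr{A}_i(v)$ whenever $(w,v)\in\sim_i$, $V:\mathcal{P}\to 2^W$. $(w,v)\in\approx_i$ iff $\mathscr{A}_i(w)=\mathscr{A}_i(v)$ and $w,v$ agree on every $p\in\mathscr{A}_i(w)$. $\sim_i\circ\approx_i=\{(w,v):\exists t\,((w,t)\in\approx_i,(t,v)\in\sim_i)\}$; $R^+$ is the transitive closure. Language $\mathcal{L}_{AIL}$: $\varphi::=p\mid\neg\varphi\mid\varphi\wedge\varphi\mid A_i\varphi\mid I_i\varphi\mid E_i\varphi\mid[\approx]_i\varphi\mid[\circ^+]_i\varphi$. Semantics: $p$ true at $w$ iff $w\in V(p)$; Boolean as usual; $A_i\varphi$ iff $At(\varphi)\subseteq\mathscr{A}_i(w)$ ($At$ = atoms occurring); $I_i\varphi$, $[\approx]_i\varphi$, $[\circ^+]_i\varphi$ iff $\varphi$ holds at all successors of $w$ along $\sim_i$, $\approx_i$, $(\sim_i\circ\approx_i)^+$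 respectively; $E_i\varphi$ iff $A_i\varphi$ and $[\circ^+]_i\varphi$ hold. The Hilbert system $\mathbf{AIL}$ has axioms (for all formulas $\varphi,\psi$, atoms $p$, agents $i,j$): all propositional tautologies; $A_i\varphi\leftrightarrow A_i\neg\varphi$; $A_i(\varphi\wedge\psi)\leftrightarrow A_i\varphi\wedge A_i\psi$; $A_i\varphi\leftrightarrow A_iA_j\varphi$; $A_i\varphi\leftrightarrow A_iI_j\varphi$; $A_i\varphi\leftrightarrow A_i[\approx]_j\varphi$; $A_i\varphi\leftrightarrow A_i[\circ^+]_j\varphi$; $A_i\varphi\leftrightarrow A_iE_j\varphi$; $A_i\varphi\to I_iA_i\varphi$; $\neg A_i\varphi\to I_i\neg A_i\varphi$; $A_ip\wedge p\to[\approx]_ip$; for $\Box\in\{I_i,[\approx]_i\}$: $\Box(\varphi\to\psi)\to(\Box\varphi\to\Box\psi)$, $\Box\varphi\to\varphi$, $\neg\Box\varphi\to\Box\neg\Box\varphi$; $[\circ^+]_i(\varphi\to\psi)\to([\circ^+]_i\varphi\to[\circ^+]_i\psi)$; $[\circ^+]_i\varphi\to\varphi\wedge[\approx]_iI_i[\circ^+]_i\varphi$; $[\circ^+]_i(\varphi\to[\approx]_iI_i\varphi)\to(\varphi\to[\circ^+]_i\varphi)$; $E_i\varphi\leftrightarrow A_i\varphi\wedge[\circ^+]_i\varphi$. Rules: modus ponens, and necessitation for each of $I_i$, $[\approx]_i$, $[\circ^+]_i$ (from $\vdash\varphi$ infer $\vdash\Box\varphi$). $\vdash\varphi$ means $\varphi$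 is a theorem. *)

From Stdlib Require Import List Relations.
Import ListNotations.

(* Atoms: the countable set P is represented by nat. *)
Definition atom := nat.

Section Syntax.
Variable G : Type. (* agents *)

Inductive form : Type :=
| Atom : atom -> form
| Neg : form -> form
| And : form -> form -> form
| Aw : G -> form -> form
| Imp : G -> form -> form
| Exp : G -> form -> form
| BoxApprox : G -> form -> form
| BoxCirc : G -> form -> form.

Fixpoint atoms (f : form) : list atom :=
  match f with
  | Atom p => [p]
  | Neg a => atoms a
  | And a b => atoms a ++ atoms b
  | Aw _ a | Imp _ a | Exp _ a | BoxApprox _ a | BoxCirc _ a => atoms a
  end.

Definition Or (a b : form) := Neg (And (Neg a) (Neg b)).
Definition Impl (a b : form) := Neg (And a (Neg b)).
Definition Iff (a b : form) := And (Impl a b) (Impl b a).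
End Syntax.

Arguments Atom {G}. Arguments Neg {G}. Arguments And {G}. Arguments Aw {G}.
Arguments Imp {G}. Arguments Exp {G}. Arguments BoxApprox {G}.
Arguments BoxCirc {G}. Arguments Or {G}. Arguments Impl {G}. Arguments Iff {G}.
Arguments atoms {G}.

Record model (G : Type) : Type := {
  world : Type;
  world_inhabited : inhabited world;
  sim : G -> world -> world -> Prop;
  sim_equiv : forall i, equivalence world (sim i);
  aw : G -> world -> atom -> Prop;
  aw_sim : forall i w v, sim i w v -> forall p, aw i w p <-> aw i v p;
  val : atom -> world -> Prop
}.
Arguments world {G}. Arguments sim {G}. Arguments aw {G}. Arguments val {G}.

Section Semantics.
Variables (G : Type) (M : model G).

Definition approx (i : G) (w v : world M) : Prop :=
  (forall p, aw M i w p <-> aw M i v p) /\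
  (forall p, aw M i w p -> (val M p w <-> val M p v)).

Definition circ (i : G) (w v : world M) : Prop :=
  exists t, approx i w t /\ sim M i t v.

Definition circ_plus (i : G) : relation (world M) := clos_trans _ (circ i).

Definition aware (i : G) (w : world M) (f : form G) : Prop :=
  forall p, In p (atoms f) -> aw M i w p.

Fixpoint sat (w : world M) (f : form G) : Prop :=
  match f with
  | Atom p => val M p w
  | Neg a => ~ sat w a
  | And a b => sat w a /\ sat w b
  | Aw i a => aware i w a
  | Imp i a => forall v, sim M i w v -> sat v a
  | Exp i a => aware i w a /\ (forall v, circ_plus i w v -> sat v a)
  | BoxApprox i a => forall v, approx i w v -> sat v a
  | BoxCirc i a => forall v, circ_plus i w v -> sat v a
  end.
End Semantics.
Arguments sat {G} M w f.

(* Propositional tautologies: true under every boolean valuation of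
   the formulas treating every non-Boolean formula as a propositional letter. *)
Fixpoint peval {G : Type} (v : form G -> bool) (f : form G) : bool :=
  match f with
  | Neg a => negb (peval v a)
  | And a b => andb (peval v a) (peval v b)
  | _ => v f
  end.
Definition tautology {G : Type} (f : form G) : Prop :=
  forall v : form G -> bool, peval v f = true.

Inductive prov {G : Type} : form G -> Prop :=
| ax_taut : forall f, tautology f -> prov f
| ax_A_neg : forall i f, prov (Iff (Aw i f) (Aw i (Neg f)))
| ax_A_and : forall i f g, prov (Iff (Aw i (And f g)) (And (Aw i f) (Aw i g)))
| ax_A_A : forall i j f, prov (Iff (Aw i f) (Aw i (Aw j f)))
| ax_A_I : forall i j f, prov (Iff (Aw i f) (Aw i (Imp j f)))
| ax_A_approx : forall i j f, prov (Iff (Aw i f) (Aw i (BoxApprox j f)))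
| ax_A_circ : forall i j f, prov (Iff (Aw i f) (Aw i (BoxCirc j f)))
| ax_A_E : forall i j f, prov (Iff (Aw i f) (Aw i (Exp j f)))
| ax_A_intro : forall i f, prov (Impl (Aw i f) (Imp i (Aw i f)))
| ax_nA_intro : forall i f, prov (Impl (Neg (Aw i f)) (Imp i (Neg (Aw i f))))
| ax_A_atom : forall i p,
    prov (Impl (And (Aw i (Atom p)) (Atom p)) (BoxApprox i (Atom p)))
| ax_K_I : forall i f g, prov (Impl (Imp i (Impl f g)) (Impl (Imp i f) (Imp i g)))
| ax_T_I : forall i f, prov (Impl (Imp i f) f)
| ax_5_I : forall i f, prov (Impl (Neg (Imp i f)) (Imp i (Neg (Imp i f))))
| ax_K_approx : forall i f g,
    prov (Impl (BoxApprox i (Impl f g)) (Impl (BoxApprox i f) (BoxApprox i g)))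
| ax_T_approx : forall i f, prov (Impl (BoxApprox i f) f)
| ax_5_approx : forall i f,
    prov (Impl (Neg (BoxApprox i f)) (BoxApprox i (Neg (BoxApprox i f))))
| ax_K_circ : forall i f g,
    prov (Impl (BoxCirc i (Impl f g)) (Impl (BoxCirc i f) (BoxCirc i g)))
| ax_mix : forall i f,
    prov (Impl (BoxCirc i f) (And f (BoxApprox i (Imp i (BoxCirc i f)))))
| ax_ind : forall i f,
    prov (Impl (BoxCirc i (Impl f (BoxApprox i (Imp i f)))) (Impl f (BoxCirc i f)))
| ax_E : forall i f, prov (Iff (Exp i f) (And (Aw i f) (BoxCirc i f)))
| r_mp : forall f g, prov (Impl f g) -> prov f -> prov g
| r_nec_I : forall i f, prov f -> prov (Imp i f)
| r_nec_approx : forall i f, prov f -> prov (BoxApprox i f)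
| r_nec_circ : forall i f, prov f -> prov (BoxCirc i f).

Definition finite_type (G : Type) : Prop := exists l : list G, forall i : G, In i l.

From Stdlib Require Import List Relations Classical ClassicalEpsilon.

(* The awareness axioms hold because the
   modal operators do not change the atoms of a formula and awareness is
   constant on ~_i-classes; the three boxes are normal, with S5 behaviour for
   the equivalences ~_i and ≈_i; the mix axiom unfolds one (≈_i ; ~_i)-step of
   the transitive closure, and the induction axiom is induction along that
   closure, started at w itself because ≈_i ; ~_i is reflexive. *)

Lemma clos_refl_trans_invariant (A : Type) (R : relation A) (P : A -> Prop) (x : A) :
  P x ->
  (forall y z, clos_refl_trans A R x y -> P y -> R y z -> P z) ->
  forall y, clos_refl_trans A R x y -> P y.
Proof.
  intros Px step y Hxy.
  apply clos_rt_rtn1_iff in Hxy.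
  induction Hxy as [|y z Ryz Hxy IH]; [exact Px|].
  apply (step y z); [apply clos_rt_rtn1_iff, Hxy | exact IH | exact Ryz].
Qed.

Definition euclidean (A : Type) (R : relation A) : Prop :=
  forall x y z, R x y -> R x z -> R y z.

Lemma equiv_euclidean (A : Type) (R : relation A) : equivalence A R -> euclidean A R.
Proof.
  intros [_ Rtrans Rsym] x y z Rxy Rxz.
  apply (Rtrans y x z); [apply Rsym|]; assumption.
Qed.

Section Soundness.
Variables (G : Type) (M : model G).
Implicit Types (w v : world M) (f g : form G) (i : G).

Lemma sat_Impl w f g : sat M w (Impl f g) <-> (sat M w f -> sat M w g).
Proof.
  simpl; split.
  - intros H Hf; apply NNPP; intros Hg; exact (H (conj Hf Hg)).
  - intros H [Hf Hg]; exact (Hg (H Hf)).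
Qed.

Lemma sat_Iff w f g : sat M w (Iff f g) <-> (sat M w f <-> sat M w g).
Proof.
  change (sat M w (Impl f g) /\ sat M w (Impl g f) <-> (sat M w f <-> sat M w g)).
  rewrite !sat_Impl; tauto.
Qed.

Lemma sat_tautology w f : tautology f -> sat M w f.
Proof.
  intros Htaut.
  pose (val_w := fun g => if excluded_middle_informative (sat M w g) then true else false).
  enough (peval_sat : forall g, peval val_w g = true <-> sat M w g)
    by apply peval_sat, Htaut.
  induction g; cbn [peval];
    try (unfold val_w; destruct excluded_middle_informative; intuition congruence).
  - rewrite Bool.negb_true_iff, <- Bool.not_true_iff_false; simpl sat; tauto.
  - rewrite Bool.andb_true_iff; simpl sat; tauto.
Qed.

Section RelationalBox.
Variables (R : relation (world M)) (box : form G -> form G).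
Hypothesis sat_box : forall w f, sat M w (box f) <-> forall v, R w v -> sat M v f.

Lemma box_K w f g : sat M w (Impl (box (Impl f g)) (Impl (box f) (box g))).
Proof.
  rewrite !sat_Impl, !sat_box; intros Hfg Hf v Rwv.
  apply (proj1 (sat_Impl v f g)); auto.
Qed.

Lemma box_T w f : reflexive _ R -> sat M w (Impl (box f) f).
Proof. intros Rrefl; rewrite sat_Impl, sat_box; auto. Qed.

Lemma box_5 w f : euclidean _ R -> sat M w (Impl (Neg (box f)) (box (Neg (box f)))).
Proof.
  intros Reucl; rewrite sat_Impl, (sat_box w (Neg (box f))); simpl.
  intros Hnot v Rwv Hv; apply Hnot; rewrite sat_box in *.
  intros u Rwu; apply Hv, (Reucl w); assumption.
Qed.

Lemma box_nec w f : (forall v, sat M v f) -> sat M w (box f).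
Proof. rewrite sat_box; auto. Qed.

End RelationalBox.

Lemma approx_equiv i : equivalence _ (approx G M i).
Proof.
  split.
  - intros w; split; tauto.
  - intros w v u [Aw_wv Val_wv] [Aw_vu Val_vu]; split; intros p.
    + rewrite Aw_wv; apply Aw_vu.
    + intros Hp; rewrite (Val_wv p Hp); apply Val_vu, Aw_wv, Hp.
  - intros w v [Aw_wv Val_wv]; split; intros p.
    + symmetry; apply Aw_wv.
    + intros Hp; symmetry; apply Val_wv, Aw_wv, Hp.
Qed.

Lemma circ_refl i w : circ G M i w w.
Proof.
  exists w; split; [apply approx_equiv | apply (sim_equiv G M i)].
Qed.

Lemma circ_plus_of_refl_trans i w v :
  clos_refl_trans _ (circ G M i) w v -> circ_plus G M i w v.
Proof. intros Hwv; apply (clos_rt_t _ _ w v v Hwv), t_step, circ_refl. Qed.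

Lemma circ_plus_approx_sim i w t u v :
  approx G M i w t -> sim M i t u -> circ_plus G M i u v -> circ_plus G M i w v.
Proof. intros Hwt Htu; apply t_trans, t_step; exists t; split; assumption. Qed.

Lemma aware_And i w f g : aware G M i w (And f g) <-> aware G M i w f /\ aware G M i w g.
Proof.
  unfold aware; simpl; split.
  - intros H; split; intros p Hp; apply H, in_or_app; auto.
  - intros [Hf Hg] p Hp; apply in_app_or in Hp as [Hp|Hp]; auto.
Qed.

Lemma aware_sim i w v f : sim M i w v -> aware G M i w f <-> aware G M i v f.
Proof.
  intros Hwv; unfold aware; split; intros H p Hp; apply (aw_sim G M i w v Hwv), H, Hp.
Qed.

Lemma sat_Aw_intro i w f : sat M w (Impl (Aw i f) (Imp i (Aw i f))).
Proof. rewrite sat_Impl; intros Hf v Hwv; apply (aware_sim i w v f Hwv), Hf. Qed.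

Lemma sat_not_Aw_intro i w f : sat M w (Impl (Neg (Aw i f)) (Imp i (Neg (Aw i f)))).
Proof. rewrite sat_Impl; intros Hf v Hwv; simpl; rewrite <- (aware_sim i w v f Hwv); exact Hf. Qed.

Lemma sat_Aw_atom i w p :
  sat M w (Impl (And (Aw i (Atom p)) (Atom p)) (BoxApprox i (Atom p))).
Proof.
  rewrite sat_Impl; intros [Hp Vp] v [_ Val_wv]; apply Val_wv; [apply Hp; left|]; auto.
Qed.

Lemma sat_mix i w f :
  sat M w (Impl (BoxCirc i f) (And f (BoxApprox i (Imp i (BoxCirc i f))))).
Proof.
  rewrite sat_Impl; intros Hf; split.
  - apply Hf, circ_plus_of_refl_trans, rt_refl.
  - intros t Hwt u Htu v Huv; apply Hf, (circ_plus_approx_sim i w t u v); assumption.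
Qed.

Lemma sat_induction i w f :
  sat M w (Impl (BoxCirc i (Impl f (BoxApprox i (Imp i f)))) (Impl f (BoxCirc i f))).
Proof.
  rewrite !sat_Impl; intros Hstep Hf v Hwv.
  apply (clos_refl_trans_invariant _ (circ G M i) (fun u => sat M u f) w Hf);
    [|apply clos_t_clos_rt, Hwv].
  intros y z Hwy Hy [t [Hyt Htz]].
  assert (Hy_step : sat M y (Impl f (BoxApprox i (Imp i f))))
    by exact (Hstep y (circ_plus_of_refl_trans i w y Hwy)).
  rewrite sat_Impl in Hy_step; exact (Hy_step Hy t Hyt z Htz).
Qed.

End Soundness.

Theorem theorem3 (G : Type) (HG : finite_type G) (f : form G) :
  prov f -> forall (M : model G) (w : world M), sat M w f.
Proof.
  induction 1; intros M w.
  - apply sat_tautology; assumption.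
  - apply sat_Iff, iff_refl.
  - apply sat_Iff, aware_And.
  - apply sat_Iff, iff_refl.
  - apply sat_Iff, iff_refl.
  - apply sat_Iff, iff_refl.
  - apply sat_Iff, iff_refl.
  - apply sat_Iff, iff_refl.
  - apply sat_Aw_intro.
  - apply sat_not_Aw_intro.
  - apply sat_Aw_atom.
  - apply (box_K _ M (sim M i)); reflexivity.
  - apply (box_T _ M (sim M i)); [reflexivity | apply (sim_equiv G M i)].
  - apply (box_5 _ M (sim M i)); [reflexivity | apply equiv_euclidean, (sim_equiv G M i)].
  - apply (box_K _ M (approx G M i)); reflexivity.
  - apply (box_T _ M (approx G M i)); [reflexivity | apply approx_equiv].
  - apply (box_5 _ M (approx G M i)); [reflexivity | apply equiv_euclidean, approx_equiv].
  - apply (box_K _ M (circ_plus G M i)); reflexivity.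
  - apply sat_mix.
  - apply sat_induction.
  - apply sat_Iff, iff_refl.
  - eapply sat_Impl; auto.
  - apply (box_nec _ M (sim M i)); [reflexivity | auto].
  - apply (box_nec _ M (approx G M i)); [reflexivity | auto].
  - apply (box_nec _ M (circ_plus G M i)); [reflexivity | auto].
Qed.
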